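(* Let $n\ge3$ and let $U$ be a finite set with $|U|\ge n^{4n}$ and a fixed enumeration $U=\{v_1,\dots,v_{|U|}\}$. Let $V_1,\dots,V_n$ be i.i.d. random subsets of $U$, each obtained by including every element of $U$ independently with probability $\delta=\frac{1}{4n^2}$. For $t\in[n]$ let $P_t=\bigcap_{i=1}^{t-1}V_i$ (with $P_1=U$) and $S_t=\bigcap_{i=t}^n(U\setminus V_i)$, and when $P_t\ne\emptyset$ let $J_t=v_{r_t}$ with $r_t=\min\{r: v_r\in P_t\}$. Then $$\Pr\big(\text{for all }t\in[n]:\ P_t\ne\emptyset\ \text{and}\ J_t\in S_t\big)\ge\frac12.$$ *)

From mathcomp Require Import all_boot all_order all_algebra.
Set Implicit Arguments. Unset Strict Implicit. Unset Printing Implicit Defensive.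
Import Order.TTheory GRing.Theory Num.Theory.
Local Open Scope ring_scope.

(* U = 'I_N with the enumeration v_r = r (0-based); the n random subsets
   V_1..V_n are indexed by 'I_n (0-based). A configuration is the tuple of subsets. *)
Definition config (n N : nat) := {ffun 'I_n -> {set 'I_N}}.

Definition weight (R : pzRingType) (d : R) (n N : nat) (V : config n N) : R :=
  \prod_(i < n) \prod_(u : 'I_N) (if u \in V i then d else 1 - d).

Definition Prob (R : pzRingType) (d : R) (n N : nat) (E : pred (config n N)) : R :=
  \sum_(V : config n N | E V) weight d V.

Definition Pset (n N : nat) (V : config n N) (t : 'I_n) : {set 'I_N} :=
  \bigcap_(i : 'I_n | (i < t)%N) V i.

Definition Sset (n N : nat) (V : config n N) (t : 'I_n) : {set 'I_N} :=
  \bigcap_(i : 'I_n | (t <= i)%N) ~: V i.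

Definition Jelt (n N : nat) (V : config n N) (t : 'I_n) : option 'I_N :=
  [pick j in Pset V t | [forall k in Pset V t, (j <= k)%N]].

Definition goodEvent (n N : nat) (V : config n N) : bool :=
  [forall t : 'I_n, (Pset V t != set0) &&
     (if Jelt V t is Some j then j \in Sset V t else false)].

(* If a configuration is bad, then either P_n is empty, or for some t the
   minimum j of P_t lies in some V_i with i >= t.  Read column by column (one
   boolean vector per element of U), a configuration has independent columns,
   so each of these events has an explicit product probability.  For fixed t
   the probabilities over j form a geometric series of total at most
   1 - (1 - delta)^(n - t) <= n delta (Bernoulli), hence at most
   n^2 delta = 1/4 over all t; and P_n is empty with probability
   (1 - delta^(n-1))^N <= 1/(1 + N delta^(n-1)) <= 1/4 because
   N >= n^(4n) >= 3 delta^(1-n).  The union bound leaves 1/2. *)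

From mathcomp Require Import all_boot all_order all_algebra.
From mathcomp Require Import ring lra zify.
Import Order.TTheory GRing.Theory Num.Theory.
Set Implicit Arguments. Unset Strict Implicit. Unset Printing Implicit Defensive.
Local Open Scope ring_scope.

Definition ones_before n (t : nat) (c : {ffun 'I_n -> bool}) : bool :=
  [forall i : 'I_n, (i < t)%N ==> c i].

Definition zeros_from n (t : nat) (c : {ffun 'I_n -> bool}) : bool :=
  [forall i : 'I_n, (t <= i)%N ==> ~~ c i].

Section Columns.

Variables n N : nat.

Definition column (V : config n N) (u : 'I_N) : {ffun 'I_n -> bool} :=
  [ffun i => u \in V i].

Definition columns (V : config n N) : {ffun 'I_N -> {ffun 'I_n -> bool}} :=
  [ffun u => column V u].

Definition config_of_columns (g : {ffun 'I_N -> {ffun 'I_n -> bool}}) :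
  config n N := [ffun i => [set u | g u i]].

Lemma column_config_of_columns g u : column (config_of_columns g) u = g u.
Proof. by apply/ffunP => i; rewrite !ffunE inE. Qed.

Lemma columnsK : cancel columns config_of_columns.
Proof. by move=> V; apply/ffunP => i; apply/setP => u; rewrite !ffunE inE !ffunE. Qed.

Lemma config_of_columnsK : cancel config_of_columns columns.
Proof. by move=> g; apply/ffunP => u; rewrite ffunE column_config_of_columns. Qed.

Lemma mem_Pset (V : config n N) t u :
  (u \in Pset V t) = ones_before t (column V u).
Proof.
apply/bigcapP/forallP => Vu i; last by move=> lt_it; move: (Vu i); rewrite lt_it ffunE.
by apply/implyP => lt_it; rewrite ffunE; apply: Vu.
Qed.

Lemma mem_Sset (V : config n N) t u :
  (u \in Sset V t) = zeros_from t (column V u).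
Proof.
apply/bigcapP/forallP => Vu i; last by move=> le_ti; move: (Vu i); rewrite le_ti ffunE inE.
by apply/implyP => le_ti; rewrite ffunE -in_setC; apply: Vu.
Qed.

Lemma Pset_subset (V : config n N) (s t : 'I_n) :
  (s <= t)%N -> Pset V t \subset Pset V s.
Proof.
move=> le_st; apply/subsetP => u; rewrite !mem_Pset => /forallP Vu.
by apply/forallP => i; apply/implyP => lt_is; apply: (implyP (Vu i)); apply: leq_trans le_st.
Qed.

End Columns.

Section ColumnWeights.

Variables (R : comPzRingType) (d : R).

Definition column_weight n (c : {ffun 'I_n -> bool}) : R :=
  \prod_i (if c i then d else 1 - d).

Lemma weight_columns n N (V : config n N) :
  weight d V = \prod_u column_weight (column V u).
Proof.
rewrite /weight exchange_big; apply: eq_bigr => u _; apply: eq_bigr => i _.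
by rewrite ffunE.
Qed.

Lemma Prob_columnwise n N (E : pred (config n N))
    (Q : 'I_N -> pred {ffun 'I_n -> bool}) :
  (forall V, E V = [forall u, Q u (column V u)]) ->
  Prob d E = \prod_u \sum_(c | Q u c) column_weight c.
Proof.
move=> EQ; rewrite /Prob (reindex (@config_of_columns n N)) /=; last first.
  by apply: onW_bij; exists (@columns n N); [apply: config_of_columnsK | apply: columnsK].
rewrite bigA_distr_big_dep; apply: eq_big => g.
  by rewrite EQ; apply/forallP/familyP => Qg u; move: (Qg u); rewrite column_config_of_columns.
by move=> _; rewrite weight_columns; apply: eq_bigr => u _; rewrite column_config_of_columns.
Qed.

Lemma sum_column_weight_coordwise n (Q : 'I_n -> pred bool) :
  \sum_(c : {ffun 'I_n -> bool} | [forall i, Q i (c i)]) column_weight c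
  = \prod_i \sum_(b | Q i b) (if b then d else 1 - d).
Proof. by rewrite bigA_distr_big_dep; apply: eq_bigl => c; apply/forallP/familyP. Qed.

Lemma sum_column_weight n : \sum_(c : {ffun 'I_n -> bool}) column_weight c = 1.
Proof.
rewrite -(bigA_distr_bigA (fun (_ : 'I_n) (b : bool) => if b then d else 1 - d)).
by apply: big1 => i _; rewrite big_bool /= addrC subrK.
Qed.

Lemma sum_column_weightC n (P : pred {ffun 'I_n -> bool}) :
  \sum_(c | ~~ P c) column_weight c = 1 - \sum_(c | P c) column_weight c.
Proof. by rewrite -(sum_column_weight n) (bigID P xpredT) /= addrAC subrr add0r. Qed.

Lemma prod_if_lt n t (a b : R) : (t <= n)%N ->
  \prod_(i < n) (if (i < t)%N then a else b) = a ^+ t * b ^+ (n - t).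
Proof.
move=> le_tn; rewrite -(big_mkord xpredT (fun i => if (i < t)%N then a else b)).
rewrite (@big_cat_nat _ _ _ t) //=.
rewrite (@eq_big_nat _ _ _ 0 t _ (fun=> a)); last by move=> i /andP[_ ->].
rewrite (@eq_big_nat _ _ _ t n _ (fun=> b)); last by move=> i /andP[]; rewrite leqNgt => /negbTE ->.
by rewrite !prodr_const_nat subn0.
Qed.

Lemma prod_if_lt_eq N (j : 'I_N) (a b : R) :
  \prod_(u < N) (if (u < j)%N then a else if u == j :> nat then b else 1) = a ^+ j * b.
Proof.
rewrite -(big_mkord xpredT (fun u => if (u < j)%N then a else if u == j :> nat then b else 1)).
rewrite (@big_cat_nat _ _ _ j) //=; last exact: ltnW.
rewrite (@big_cat_nat _ _ _ j.+1 j) //= big_nat1 ltnn eqxx.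
rewrite (@eq_big_nat _ _ _ 0 j _ (fun=> a)); last by move=> i /andP[_ ->].
rewrite (@eq_big_nat _ _ _ j.+1 N _ (fun=> 1)); last first.
  by move=> i /andP[lt_ji _]; rewrite ltnNge (ltnW lt_ji) gtn_eqF.
by rewrite !prodr_const_nat expr1n mulr1 subn0.
Qed.

Lemma sum_column_weight_ones_before n t : (t <= n)%N ->
  \sum_(c : {ffun 'I_n -> bool} | ones_before t c) column_weight c = d ^+ t.
Proof.
move=> le_tn; rewrite (sum_column_weight_coordwise (fun i b => (i < t)%N ==> b)).
rewrite (eq_bigr (fun i : 'I_n => if (i < t)%N then d else 1)) ?prod_if_lt ?expr1n ?mulr1 //.
move=> i _; rewrite big_mkcond big_bool /=.
by case: (i < t)%N; rewrite /= ?addr0 // addrC subrK.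
Qed.

Lemma sum_column_weight_pattern n t : (t <= n)%N ->
  \sum_(c : {ffun 'I_n -> bool} | [forall i : 'I_n, c i == (i < t)%N]) column_weight c
  = d ^+ t * (1 - d) ^+ (n - t).
Proof.
move=> le_tn; rewrite (sum_column_weight_coordwise (fun i b => b == (i < t)%N)).
rewrite (eq_bigr (fun i : 'I_n => if (i < t)%N then d else 1 - d)) ?prod_if_lt //.
by move=> i _; rewrite big_mkcond big_bool /=; case: (i < t)%N; rewrite ?addr0 ?add0r.
Qed.

Lemma ones_before_zeros_fromE n t (c : {ffun 'I_n -> bool}) :
  ones_before t c && zeros_from t c = [forall i : 'I_n, c i == (i < t)%N].
Proof.
apply/andP/forallP => [[/forallP c1 /forallP c0] i|c_eq]; last first.
  by split; apply/forallP => i; rewrite (eqP (c_eq i)) ?implybb // -ltnNge implybb.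
by case: ltnP => [lt_it|le_ti]; [rewrite (implyP (c1 i)) | rewrite (negbTE (implyP (c0 i) _))].
Qed.

Lemma sum_column_weight_ones_before_not_zeros_from n t : (t <= n)%N ->
  \sum_(c : {ffun 'I_n -> bool} | ones_before t c && ~~ zeros_from t c) column_weight c
  = d ^+ t - d ^+ t * (1 - d) ^+ (n - t).
Proof.
move=> le_tn; rewrite -(sum_column_weight_pattern le_tn).
rewrite -(eq_bigl _ _ (@ones_before_zeros_fromE n t)) -(sum_column_weight_ones_before le_tn).
by rewrite [X in _ = X - _](bigID (zeros_from t)) /= addrAC subrr add0r.
Qed.

Lemma sum_weight n N : \sum_(V : config n N) weight d V = 1.
Proof.
rewrite -[LHS]/(Prob d (@predT (config n N))).
rewrite (@Prob_columnwise n N predT (fun _ _ => true)); last by move=> V; apply/esym/forallP.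
by apply: big1 => u _; apply: sum_column_weight.
Qed.

Lemma Prob_predC n N (E : pred (config n N)) : Prob d (predC E) = 1 - Prob d E.
Proof. by rewrite -(sum_weight n N) /Prob (bigID E xpredT) /= addrAC subrr add0r. Qed.

End ColumnWeights.

Lemma union_bound (R : numDomainType) (T K : finType) (w : T -> R)
    (P F0 : pred T) (F : K -> pred T) :
  (forall x, 0 <= w x) -> (forall x, P x -> F0 x || [exists k, F k x]) ->
  \sum_(x | P x) w x <= \sum_(x | F0 x) w x + \sum_k \sum_(x | F k x) w x.
Proof.
move=> w_ge0 cover; rewrite (exchange_big_dep xpredT) //=.
rewrite big_mkcond [X in _ <= X + _]big_mkcond -big_split /=.
have sum_ge0 x : 0 <= \sum_(k | F k x) w x by apply: sumr_ge0.
apply: ler_sum => x _; have [Px|_] := boolP (P x); last first.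
  by rewrite addr_ge0 //; case: ifP.
have [F0x|/existsP[k Fkx]] := orP (cover x Px); first by rewrite F0x lerDl.
rewrite (bigD1 k) //= ler_wpDl ?lerDl ?sumr_ge0 //.
by case: ifP.
Qed.

Lemma bernoulli (R : realDomainType) (x : R) m : -1 <= x ->
  1 + m%:R * x <= (1 + x) ^+ m.
Proof.
move=> x_ge_m1; elim: m => [|m IH]; first by rewrite mul0r addr0 expr0.
have mx2_ge0 : 0 <= m%:R * (x * x) :> R by rewrite mulr_ge0 ?ler0n ?mulr_ge0_le0 // sqr_ge0.
rewrite exprSr -natr1; apply: le_trans (_ : (1 + m%:R * x) * (1 + x) <= _); first by nra.
by rewrite ler_wpM2r //; lra.
Qed.

Lemma one_sub_exp_le (R : realDomainType) (d : R) m : d <= 1 ->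
  1 - (1 - d) ^+ m <= m%:R * d.
Proof.
move=> le_d1; have : 1 + m%:R * - d <= (1 - d) ^+ m by apply: bernoulli; lra.
by rewrite mulrN; lra.
Qed.

Lemma exp_one_sub_mul_le (R : realDomainType) (x : R) N : 0 <= x -> x <= 1 ->
  (1 - x) ^+ N * (1 + N%:R * x) <= 1.
Proof.
move=> x_ge0 le_x1.
have sq_le1 : (1 - x * x) ^+ N <= 1 by apply: exprn_ile1; nra.
apply: le_trans sq_le1; have -> : 1 - x * x = (1 - x) * (1 + x) by ring.
by rewrite exprMn ler_wpM2l ?exprn_ge0 ?subr_ge0 // bernoulli //; lra.
Qed.

Section Failure.

Variables (n N : nat).

Definition last_prefix_empty (V : config n.+1 N) : bool := Pset V ord_max == set0.

Definition min_not_in_Sset (t : 'I_n.+1) (j : 'I_N) (V : config n.+1 N) : bool :=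
  [&& j \in Pset V t, [forall k : 'I_N, (k < j)%N ==> (k \notin Pset V t)]
    & j \notin Sset V t].

Lemma not_goodEvent_cover (V : config n.+1 N) : ~~ goodEvent V ->
  last_prefix_empty V || [exists tj : 'I_n.+1 * 'I_N, min_not_in_Sset tj.1 tj.2 V].
Proof.
rewrite negb_forall => /existsP[t]; rewrite negb_and negbK.
have [P0|/set0Pn[x Px]] := eqVneq (Pset V t) set0.
  by move=> _; apply/orP; left; rewrite /last_prefix_empty -subset0 -P0 Pset_subset // -ltnS.
rewrite /Jelt; case: pickP => [j /andP[Pj /forallP j_min] /= Sj|no_min _].
  apply/orP; right; apply/existsP; exists (t, j); rewrite /min_not_in_Sset /= Pj Sj andbT.
  apply/forallP => k; apply/implyP => lt_kj; apply/negP => Pk.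
  by move: (j_min k); rewrite Pk /= leqNgt lt_kj.
case: (arg_minnP (@nat_of_ord N) Px) => m Pm m_min.
have {}Pm : m \in Pset V t := Pm.
move: (no_min m); rewrite Pm /= => /negbT/negP[].
by apply/forallP => k; apply/implyP/m_min.
Qed.

Variables (R : comPzRingType) (d : R).

Lemma Prob_last_prefix_empty : Prob d last_prefix_empty = (1 - d ^+ n) ^+ N.
Proof.
rewrite (@Prob_columnwise _ _ _ _ _ (fun _ c => ~~ ones_before n c)); last first.
  move=> V; apply/eqP/forallP => [P0 u|notP].
    by rewrite -(mem_Pset V ord_max) P0 inE.
  by apply/setP => u; rewrite inE mem_Pset; apply/negbTE.
rewrite (eq_bigr (fun=> 1 - d ^+ n)) ?prodr_const ?card_ord // => u _.
by rewrite sum_column_weightC sum_column_weight_ones_before.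
Qed.

Lemma Prob_min_not_in_Sset (t : 'I_n.+1) (j : 'I_N) :
  Prob d (min_not_in_Sset t j) =
  (1 - d ^+ t) ^+ j * (d ^+ t - d ^+ t * (1 - d) ^+ (n.+1 - t)).
Proof.
rewrite (@Prob_columnwise _ _ _ _ _ (fun u c =>
  if (u < j)%N then ~~ ones_before t c
  else if u == j then ones_before t c && ~~ zeros_from t c else true)); last first.
  move=> V; apply/and3P/forallP => [[Pj /forallP below_j Sj] u|Q].
    case: ifP => [lt_uj|_]; first by move: (below_j u); rewrite lt_uj -mem_Pset.
    by case: eqP => [->|//]; rewrite -mem_Pset -mem_Sset Pj.
  move: (Q j); rewrite ltnn eqxx -mem_Pset -mem_Sset => /andP[-> ->]; split=> //.
  by apply/forallP => k; apply/implyP => lt_kj; move: (Q k); rewrite lt_kj mem_Pset.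
rewrite -(prod_if_lt_eq j); apply: eq_bigr => u _.
have le_tn : (t <= n.+1)%N by apply: ltnW.
case: ifP => _; first by rewrite sum_column_weightC sum_column_weight_ones_before.
have [->|ne_uj] := eqVneq u j; last by rewrite ifF ?sum_column_weight //; apply: negbTE.
by rewrite eqxx sum_column_weight_ones_before_not_zeros_from.
Qed.

End Failure.

Lemma sum_Prob_min_not_in_Sset_le (R : realDomainType) (d : R) n N (t : 'I_n.+1) :
  0 <= d -> d <= 1 ->
  \sum_(j : 'I_N) Prob d (min_not_in_Sset t j) <= n.+1%:R * d.
Proof.
move=> d_ge0 le_d1; under eq_bigr do rewrite Prob_min_not_in_Sset.
set x := d ^+ t; set y := (1 - d) ^+ (n.+1 - t).
have x_ge0 : 0 <= x by apply: exprn_ge0.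
have le_x1 : x <= 1 by apply: exprn_ile1.
rewrite (eq_bigr (fun j : 'I_N => (1 - y) * ((1 - x) ^+ j * x))); last by move=> j _; ring.
rewrite -mulr_sumr -mulr_suml.
have geometric : (\sum_(j < N) (1 - x) ^+ j) * x = 1 - (1 - x) ^+ N.
  by rewrite -[RHS]opprB subrX1; ring.
have y_bound : 1 - y <= (n.+1 - t)%:R * d by apply: one_sub_exp_le; lra.
have le_nt : (n.+1 - t)%:R <= n.+1%:R :> R by rewrite ler_nat leq_subr.
have y_ge0 : 0 <= y by apply: exprn_ge0; lra.
have le_y1 : y <= 1 by apply: exprn_ile1; lra.
have pow_ge0 : 0 <= (1 - x) ^+ N by apply: exprn_ge0; lra.
rewrite geometric; nra.
Qed.

Lemma goodEvent_Prob_ge (R : realFieldType) (d : R) n N :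
  0 <= d -> d <= 1 -> n.+1%:R ^+ 2 * d <= 1 / 4 -> 3 <= N%:R * d ^+ n ->
  1 / 2 <= Prob d (@goodEvent n.+1 N).
Proof.
move=> d_ge0 le_d1 small_d large_N.
have complement := Prob_predC d (@goodEvent n.+1 N).
have bad_le : Prob d (predC (@goodEvent n.+1 N)) <= Prob d (@last_prefix_empty n N)
    + \sum_(tj : 'I_n.+1 * 'I_N) Prob d (min_not_in_Sset tj.1 tj.2).
  apply: union_bound (@not_goodEvent_cover n N) => V.
  by apply: prodr_ge0 => i _; apply: prodr_ge0 => u _; case: ifP; lra.
have min_le : \sum_(tj : 'I_n.+1 * 'I_N) Prob d (min_not_in_Sset tj.1 tj.2) <= 1 / 4.
  rewrite -(pair_big xpredT xpredT (fun t j => Prob d (min_not_in_Sset t j))) /=.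
  apply: le_trans small_d; rewrite expr2 -mulrA mulr_natl -[in X in _ *+ X](card_ord n.+1) -sumr_const.
  by apply: ler_sum => t _; apply: sum_Prob_min_not_in_Sset_le.
have empty_le : (1 - d ^+ n) ^+ N <= 1 / 4.
  have := exp_one_sub_mul_le N (exprn_ge0 n d_ge0) (exprn_ile1 n d_ge0 le_d1).
  have : 0 <= (1 - d ^+ n) ^+ N by rewrite exprn_ge0 // subr_ge0 exprn_ile1.
  nra.
rewrite Prob_last_prefix_empty in bad_le; lra.
Qed.

Lemma expn_4n_lower_bound n : (3 <= n)%N -> (3 * (4 * n ^ 2) ^ n.-1 <= n ^ (4 * n))%N.
Proof.
move=> ge_n3.
have sq_le : (4 * n ^ 2 <= n ^ 4)%N by rewrite (_ : 4 = 2 + 2)%N // expnD; nia.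
rewrite (_ : 4 * n = 4 + 4 * n.-1)%N; last by lia.
rewrite expnD expnM leq_mul //; first by apply: leq_trans sq_le; nia.
by rewrite leq_exp2r //; lia.
Qed.

Unset Implicit Arguments.

Theorem mainTheorem7 (R : realFieldType) (n N : nat) :
  (3 <= n)%N -> (n ^ (4 * n) <= N)%N ->
  1 / 2 <= Prob (1 / (4 * (n ^ 2)%:R) : R) (@goodEvent n N).
Proof.
case: n => [//|m] ge_n3 large_N; set d : R := 1 / _.
have q_ge1 : 1 <= (4 * m.+1 ^ 2)%:R :> R by rewrite ler1n muln_gt0 expn_gt0.
have d_inv : d * (4 * m.+1 ^ 2)%:R = 1.
  by rewrite /d natrM mul1r mulVf // gt_eqF //; rewrite -natrM; lra.
have d_ge0 : 0 <= d by rewrite divr_ge0 // -natrM; lra.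
apply: goodEvent_Prob_ge => //; first by nra.
  by rewrite -natrX; move: d_inv; rewrite natrM; lra.
have dm : d ^+ m * ((4 * m.+1 ^ 2) ^ m)%:R = 1 by rewrite natrX -exprMn d_inv expr1n.
have N_ge : 3 * ((4 * m.+1 ^ 2) ^ m)%:R <= N%:R :> R.
  by rewrite -natrM ler_nat (leq_trans (expn_4n_lower_bound ge_n3)).
have := exprn_ge0 m d_ge0; nra.
Qed.
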